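(* Let $K$ be a field, $P=K[x_1,\dots,x_n]$, $g_1,\dots,g_r\in P$, $I=\langle g_1,\dots,g_r\rangle$, and let $Z=(z_1,\dots,z_s)$ be a tuple of distinct indeterminates among $x_1,\dots,x_n$. Then the following are equivalent: (a) the procedure $\mathrm{CHECK}$ applied to $(g_1,\dots,g_r)$ and $Z$ returns a weight tuple $W\in\mathbb{N}^n$ (rather than ``Fail''); (b) there exists a $Z$-separating tuple $(f_1,\dots,f_s)$ of polynomials in $I$ with $f_1,\dots,f_s\in\langle g_1,\dots,g_r\rangle_K$.
   Context: $\operatorname{Supp}(f)$ is the set of terms occurring in $f$; $\operatorname{Lin}(f)$ is the homogeneous degree-1 component of $f$; $\langle\cdot\rangle_K$ denotes $K$-linear span. A tuple $(f_1,\dots,f_s)$ of polynomials in an ideal $I$ is $Z$-separating if there is a term ordering $\sigma$ with $\operatorname{LT}_\sigma(f_i)=z_i$ for all $i$. Procedure $\mathrm{LI}$ (linear interreduction), applied to a tuple $Z=(z_1,\dots,z_s)$ of distinct indeterminates and polynomials $g_1,\dots,g_r$: let $t_1>\dots>t_m$ (lexicographic order, $x_1>\dots>x_n$) be the terms of $\bigcup_j\operatorname{Supp}(g_j)$ other than $z_1,\dots,z_s$; form the coefficient matrix $M$ of $g_1,\dots,g_r$ w.r.t. column order $(z_1,\dots,z_s,t_1,\dots,t_m)$; output the polynomials whose coefficient vectors are the nonzero rows of the reduced row echelon form of $M$, in order. Procedure $\mathrm{CHECK}$ on input $(g_1,\dots,g_r)$ and $Z$: (1) set $w_1=\dots=w_n=0$,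 $\delta=\max_j\deg(g_j)$, $d=1$. (2) In each $g_j$ delete every monomial not divisible by some indeterminate of $Z$. (3) If $\dim_K\langle\operatorname{Lin}(g_1),\dots,\operatorname{Lin}(g_r)\rangle_K<\#Z$, return ``Fail''. (4) Repeat: (i) replace the current list $g_1,\dots,g_r$ by the output of $\mathrm{LI}$ applied to the current $Z$ and the current list; (ii) let $\widetilde Z$ be the set of indeterminates of the current $Z$ that occur as elements of the current list; (iii) if $\widetilde Z=\emptyset$, return ``Fail''; (iv) for each $z\in\widetilde Z$, say $z=x_k$, set $w_k=d$ and remove $z$ from $Z$; (v) in each current $g_j$ delete every monomial not divisible by some indeterminate of the (updated) $Z$; (vi) replace $d$ by $\delta d+1$; until $Z$ is empty. (5) Return $W=(w_1,\dots,w_n)$. *)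

From HB Require Import structures.
From mathcomp Require Import all_boot all_order all_algebra.
From mathcomp Require Import mpoly.

Set Implicit Arguments.
Unset Strict Implicit.
Unset Printing Implicit Defensive.

Import GRing.Theory.
Local Open Scope ring_scope.

Section Procedures.
Variable K : fieldType.
Variable n : nat.

Local Notation poly := {mpoly K[n]}.
Local Notation term := 'X_{1..n}.

(* The term (power product) of the indeterminate x_(k+1), k : 'I_n. *)
Definition var_term (k : 'I_n) : term := U_(k)%MM.

Definition term_ordering (le : rel term) : Prop :=
  [/\ reflexive le, antisymmetric le, transitive le & total le] /\
  (forall t, le 0%MM t) /\
  (forall t1 t2 t3, le t1 t2 -> le (t1 + t3)%MM (t2 + t3)%MM).

Definition is_LT (le : rel term) (f : poly) (t : term) : Prop :=
  t \in msupp f /\ (forall t', t' \in msupp f -> le t' t).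

Definition Z_separating (s : nat) (Z : 'I_s -> 'I_n) (f : 'I_s -> poly) : Prop :=
  exists le : rel term, term_ordering le /\
    forall i : 'I_s, is_LT le (f i) (var_term (Z i)).

Definition in_ideal (r : nat) (g : 'I_r -> poly) (f : poly) : Prop :=
  exists h : 'I_r -> poly, f = \sum_(j < r) h j * g j.

Definition in_Kspan (r : nat) (g : 'I_r -> poly) (f : poly) : Prop :=
  exists c : 'I_r -> K, f = \sum_(j < r) c j *: g j.

(* lexicographic comparison of exponent vectors: x_1 > x_2 > ... > x_n *)
Fixpoint lex_le (a b : seq nat) : bool :=
  match a, b with
  | x :: a', y :: b' => (x < y)%N || ((x == y) && lex_le a' b')
  | _, _ => true
  end.

Definition term_lex_le (t1 t2 : term) : bool := lex_le (tval t1) (tval t2).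

(* Gauss-Jordan elimination on the coefficient matrix whose columns are
   indexed (in this order) by the terms [cols]; rows are polynomials.
   [done] are the already computed pivot rows (in pivot order), [rest]
   the rows not yet used as pivots.  Returns the nonzero rows of the
   reduced row echelon form, in order. *)
Fixpoint gauss_jordan (cols : seq term) (done rest : seq poly) : seq poly :=
  match cols with
  | [::] => done
  | c :: cs =>
    let i := find (fun p : poly => p@_c != 0) rest in
    if (i < size rest)%N then
      let p := nth 0 rest i in
      let q := (p@_c)^-1 *: p in
      let elim (u : poly) := u - u@_c *: q in
      gauss_jordan cs (rcons (map elim done) q)
                      [seq u <- map elim rest | u != 0]
    else gauss_jordan cs done rest
  end.

Definition LI (Z : seq 'I_n) (g : seq poly) : seq poly :=
  let zt := map var_term Z in
  let others := undup [seq t <- flatten (map (@msupp n K) g) | t \notin zt] in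
  (* t_1 > ... > t_m in lex order *)
  let ts := sort (fun t1 t2 => term_lex_le t2 t1) others in
  gauss_jordan (zt ++ ts) [::] g.

Definition keep_Z (Z : seq 'I_n) (p : poly) : poly :=
  \sum_(t <- msupp p | has (fun z => (0 < t z)%N) Z) p@_t *: 'X_[t].

Definition total_degree (p : poly) : nat := \max_(t <- msupp p) mdeg t.

(* dim_K <Lin(g_1),...,Lin(g_r)>_K, computed as the rank of the r x n
   matrix of coefficients of x_1,...,x_n in g_1,...,g_r. *)
Definition dim_Lin (g : seq poly) : nat :=
  \rank (\matrix_(j < size g, k < n) (g`_j)@_(var_term k)).

(* The repeat-until loop of step (4); [fuel] bounds the number of
   iterations (each successful iteration removes >= 1 element of Z). *)
Fixpoint check_loop (delta : nat) (fuel : nat) (Z : seq 'I_n) (g : seq poly)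
    (w : {ffun 'I_n -> nat}) (d : nat) : option {ffun 'I_n -> nat} :=
  match fuel with
  | 0 => None
  | fuel'.+1 =>
    let g1 := LI Z g in
    let Zt := [seq z <- Z | 'X_[var_term z] \in g1] in
    if Zt == [::] then None
    else
      let w' := [ffun k => if k \in Zt then d else w k] in
      let Z' := [seq z <- Z | z \notin Zt] in
      let g2 := map (keep_Z Z') g1 in
      let d' := (delta * d + 1)%N in
      if Z' == [::] then Some w'
      else check_loop delta fuel' Z' g2 w' d'
  end.

(* CHECK: returns Some W, or None for "Fail". *)
Definition CHECK (g : seq poly) (Z : seq 'I_n) : option {ffun 'I_n -> nat} :=
  let w0 := [ffun _ => 0%N] in
  let delta := \max_(p <- g) total_degree p in
  let d := 1%N in
  let g0 := map (keep_Z Z) g in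
  if (dim_Lin g0 < size Z)%N then None
  else check_loop delta (size Z) Z g0 w0 d.

End Procedures.

From HB Require Import structures.
From mathcomp Require Import all_boot all_order all_algebra.
From mathcomp Require Import mpoly.

Set Implicit Arguments.
Unset Strict Implicit.
Unset Printing Implicit Defensive.
Import GRing.Theory.
Local Open Scope ring_scope.

(* If CHECK returns W, a variable z removed in the round with counter d is an element of
   the interreduced list, i.e. x_z = keep_Z Z f for some f in the K-span of the g_j.  All
   other terms of f only involve variables outside the current Z: variables weighted in
   earlier rounds, whose weights w satisfy delta * w < d, and variables outside the
   original Z, of weight 0.  As deg f <= delta these terms have W-weight < d = W(z), so
   x_z is the leading term of f for the W-graded ordering.
   Conversely, keep_Z preserves the leading terms z_i of a Z-separating tuple.  For the
   smallest remaining z, every term of its witness is divisible by some z' >= z and is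
   at most z, hence equals x_z: the witness is a multiple of x_z, so LI finds x_z and each
   round removes a variable.  The same triangularity, by induction along the ordering on
   Z, puts every x_z in the row space of the linear parts, which is the rank bound of
   step (3). *)

Section LinearSpan.
Variables (R : pzRingType) (V : lmodType R).

Definition subspace (S : V -> Prop) : Prop :=
  [/\ S 0, forall x y, S x -> S y -> S (x + y) & forall a x, S x -> S (a *: x)].

Definition lspan (l : seq V) (x : V) : Prop :=
  forall S, subspace S -> (forall y, y \in l -> S y) -> S x.

Lemma lspan_ind S l :
  subspace S -> (forall y, y \in l -> S y) -> forall x, lspan l x -> S x.
Proof. by move=> SS Sl x; apply. Qed.

Lemma lspan_subspace l : subspace (lspan l).
Proof.
split=> [S [] //|x y Hx Hy S SS Sl|a x Hx S SS Sl]; case: (SS) => _ SD SZ.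
  exact: SD (Hx S SS Sl) (Hy S SS Sl).
exact: SZ (Hx S SS Sl).
Qed.

Lemma lspan0 l : lspan l 0. Proof. by case: (lspan_subspace l). Qed.

Lemma lspanD l x y : lspan l x -> lspan l y -> lspan l (x + y).
Proof. by case: (lspan_subspace l) => _ SD _; apply: SD. Qed.

Lemma lspanZ l a x : lspan l x -> lspan l (a *: x).
Proof. by case: (lspan_subspace l) => _ _ SZ; apply: SZ. Qed.

Lemma lspanB l x y : lspan l x -> lspan l y -> lspan l (x - y).
Proof. by move=> Hx Hy; apply: lspanD Hx _; rewrite -scaleN1r; apply: lspanZ. Qed.

Lemma lspan_mem l x : x \in l -> lspan l x.
Proof. by move=> lx S _; apply. Qed.

Lemma lspan_trans l1 l2 :
  (forall y, y \in l1 -> lspan l2 y) -> forall x, lspan l1 x -> lspan l2 x.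
Proof. by apply: lspan_ind; apply: lspan_subspace. Qed.

Lemma lspan_nonzero_mem l1 l2 x :
  (forall y, y != 0 -> y \in l1 -> y \in l2) -> lspan l1 x -> lspan l2 x.
Proof.
move=> l12; apply: lspan_trans => y l1y.
by have [->|/l12/(_ l1y)/lspan_mem] := eqVneq y 0; [apply: lspan0|].
Qed.

Lemma lspan_pivot (phi : V -> R) q l x : lspan l q ->
  lspan (q :: [seq u - phi u *: q | u <- l]) x <-> lspan l x.
Proof.
move=> lq; split; apply: lspan_trans => y.
  rewrite inE => /predU1P[-> //|/mapP[u lu ->]].
  by apply: lspanB (lspanZ _ lq); apply: lspan_mem.
move=> ly; rewrite -(subrK (phi y *: q) y).
apply: (lspanD _ (lspanZ _ (lspan_mem (mem_head _ _)))).
apply: lspan_mem; apply: mem_behead; exact: (map_f (fun u => u - phi u *: q)).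
Qed.

End LinearSpan.

Section LinearImage.
Variables (R : pzRingType) (V W : lmodType R) (f : {linear V -> W}).

Lemma lspan_map l x : lspan l x -> lspan (map f l) (f x).
Proof.
apply: (lspan_ind (S := fun x => lspan (map f l) (f x))) => [|y ly]; last first.
  by apply: lspan_mem; apply: map_f.
split=> [|x1 x2|a x1]; rewrite ?linear0 ?linearD ?linearZ.
- exact: lspan0.
- exact: lspanD.
- exact: lspanZ.
Qed.

Lemma lspan_mapP l y : lspan (map f l) y -> exists2 x, lspan l x & y = f x.
Proof.
apply: (lspan_ind (S := fun y => exists2 x, lspan l x & y = f x)) => [|_ /mapP[x lx ->]].
  split=> [|_ _ [x1 l1 ->] [x2 l2 ->]|a _ [x1 l1 ->]].
  - by exists 0; rewrite ?linear0 //; apply: lspan0.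
  - by exists (x1 + x2); rewrite ?linearD //; apply: lspanD.
  - by exists (a *: x1); rewrite ?linearZ //; apply: lspanZ.
by exists x => //; apply: lspan_mem.
Qed.

End LinearImage.

Lemma lspan_fixed (R : pzRingType) (V : lmodType R) (f : {linear V -> V}) l x :
  (forall y, y \in l -> f y = y) -> lspan l x -> f x = x.
Proof.
move=> fl; apply: (lspan_ind (S := fun x => f x = x) _ fl).
by split=> [|x1 x2 fx1 fx2|a x1 fx1]; rewrite ?linear0 ?linearD ?linearZ ?fx1 ?fx2.
Qed.

Lemma submx_lspan (K : fieldType) (m k : nat) (M : 'M[K]_(m, k)) (l : seq 'rV_k) v :
  (forall y, y \in l -> (y <= M)%MS) -> lspan l v -> (v <= M)%MS.
Proof.
move=> lM; apply: (lspan_ind (S := fun v => is_true (v <= M)%MS) _ lM).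
by split=> [|x y|a x]; [exact: sub0mx | exact: addmx_sub | exact: scalemx_sub].
Qed.

Section StrongInduction.
Variables (T : eqType) (lt : rel T) (s : seq T).
Hypotheses (ltxx : irreflexive lt) (lt_trans : transitive lt).

Lemma ltn_count_lt x y : y \in s -> lt y x -> (count (lt^~ y) s < count (lt^~ x) s)%N.
Proof.
move=> sy yx.
have -> : count (lt^~ x) s =
    (count (lt^~ y) s + count (predC (lt^~ y)) [seq w <- s | lt w x])%N.
  rewrite -size_filter -(count_predC (lt^~ y)) count_filter; congr (_ + _).
  by apply: eq_count => w /=; apply/andP/idP => [[]//|wy]; split=> //; apply: lt_trans yx.
rewrite -[X in (X < _)%N]addn0 ltn_add2l -has_count; apply/hasP; exists y => /=.
  by rewrite mem_filter yx.
by rewrite ltxx.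
Qed.

Lemma strong_ind_in (P : T -> Prop) :
  (forall x, x \in s -> (forall y, y \in s -> lt y x -> P y) -> P x) ->
  forall x, x \in s -> P x.
Proof.
move=> IH x; move: {2}(count _ _).+1 (ltnSn (count (lt^~ x) s)) => m.
elim: m x => // m IHm x cx sx; apply: IH => // y sy yx.
by apply: IHm => //; apply: leq_trans (ltn_count_lt sy yx) _.
Qed.

Lemma minimal_in : s != [::] -> exists2 m, m \in s & forall y, y \in s -> ~~ lt y m.
Proof.
move=> s0; have [/hasP[m sm /allP min_m]|no_min] :=
  boolP (has (fun m => all (fun y => ~~ lt y m) s) s); first by exists m.
suff : forall x, x \in s -> False by case: s s0 {no_min} => // x s' _ /(_ x (mem_head x s')).
apply: strong_ind_in => x sx below; apply: (negP no_min); apply/hasP; exists x => //.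
by apply/allP => y sy; apply/negP; apply: below.
Qed.

End StrongInduction.

Section KeepZ.
Variables (K : fieldType) (n : nat).
Local Notation poly := {mpoly K[n]}.
Implicit Types (Z : seq 'I_n) (p f : poly).

Lemma var_termE (z k : 'I_n) : var_term z k = (z == k).
Proof. by rewrite /var_term mnm1E. Qed.

Lemma var_term_inj : injective (@var_term n).
Proof. by move=> a b /eqP; rewrite /var_term eq_mnm1 => /eqP. Qed.

Lemma mcoeff_keep_Z Z p m :
  (keep_Z Z p)@_m = if has (fun z => 0 < m z)%N Z then p@_m else 0.
Proof.
rewrite /keep_Z raddf_sum /= big_mkcond /=.
under eq_bigr => t _ do rewrite mcoeffZ mcoeffX.
case: (boolP (m \in msupp p)) => pm; last first.
  rewrite (memN_msupp_eq0 pm) if_same big1_seq // => t /andP[_ pt].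
  case: ifP => // _; case: eqP => [tm|_]; last by rewrite mulr0.
  by move: pm; rewrite -tm pt.
rewrite (bigD1_seq m) ?msupp_uniq //= eqxx mulr1 big1 ?addr0.
  by case: ifP.
by move=> t /negbTE tm; rewrite tm mulr0 if_same.
Qed.

Lemma keep_Z_is_linear Z : linear (@keep_Z K n Z).
Proof.
move=> a p q; apply/mpolyP => m.
by rewrite mcoeffD mcoeffZ !mcoeff_keep_Z mcoeffD mcoeffZ; case: ifP; rewrite ?mulr0 ?addr0.
Qed.

HB.instance Definition _ Z :=
  GRing.isLinear.Build K poly poly *:%R (keep_Z Z) (keep_Z_is_linear Z).

Lemma keep_Z_sub Z Z' p : {subset Z' <= Z} -> keep_Z Z' (keep_Z Z p) = keep_Z Z' p.
Proof.
move=> Z'Z; apply/mpolyP => m; rewrite !mcoeff_keep_Z.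
by case: ifP => // /hasP[z /Z'Z Zz mz]; case: hasP => // -[]; exists z.
Qed.

Lemma keep_Z_id Z p : keep_Z Z (keep_Z Z p) = keep_Z Z p.
Proof. exact: keep_Z_sub. Qed.

Lemma keep_Z_var Z z : z \in Z -> has (fun k => 0 < var_term z k)%N Z.
Proof. by move=> Zz; apply/hasP; exists z; rewrite // var_termE eqxx. Qed.

Lemma is_LT_keep_Z (le : rel 'X_{1..n}) Z z f :
  z \in Z -> is_LT le f (var_term z) -> is_LT le (keep_Z Z f) (var_term z).
Proof.
move=> Zz [fz fmax]; split=> [|t].
  by rewrite mcoeff_msupp mcoeff_keep_Z keep_Z_var // -mcoeff_msupp.
rewrite mcoeff_msupp mcoeff_keep_Z; case: ifP => _; last by rewrite eqxx.
by rewrite -mcoeff_msupp; apply: fmax.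
Qed.

End KeepZ.

Section GaussJordan.
Variables (K : fieldType) (n : nat).
Local Notation poly := {mpoly K[n]}.
Local Notation term := 'X_{1..n}.
Implicit Types (Z : seq 'I_n) (g : seq poly).

Definition pivot_rows (ps : seq term) (rows : seq poly) : Prop :=
  size rows = size ps /\
  forall i j, (i < size rows)%N -> (j < size rows)%N ->
    (nth 0 rows i)@_(nth 0%MM ps j) = (i == j)%:R.

Lemma pivot_rows_rcons ps rows c q :
  pivot_rows ps rows -> q@_c = 1 -> {in ps, forall t, q@_t = 0} ->
  pivot_rows (rcons ps c) (rcons [seq u - u@_c *: q | u <- rows] q).
Proof.
move=> [sz rowsE] qc qps; split; first by rewrite !size_rcons size_map sz.
have ps_j j : (j < size ps)%N -> q@_(nth 0%MM ps j) = 0.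
  by move=> jps; apply/qps/mem_nth.
rewrite size_rcons size_map => i j.
rewrite ltnS leq_eqVlt => /predU1P[->|ir]; rewrite ltnS leq_eqVlt => /predU1P[->|jr];
  rewrite !nth_rcons size_map -sz ?ltnn ?eqxx ?ir ?jr.
- by rewrite qc.
- by rewrite ps_j -?sz // (gtn_eqF jr).
- by rewrite (nth_map 0) // mcoeffB mcoeffZ qc mulr1 subrr (ltn_eqF ir).
- by rewrite (nth_map 0) // mcoeffB mcoeffZ ps_j -?sz // mulr0 subr0 rowsE.
Qed.

Lemma lspan_pivot_step c (q : poly) done rest x : lspan (done ++ rest) q ->
  lspan (rcons [seq u - u@_c *: q | u <- done] q ++
         [seq u <- [seq u - u@_c *: q | u <- rest] | u != 0]) x <->
  lspan (done ++ rest) x.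
Proof.
move=> q_span; rewrite -(lspan_pivot (fun u => u@_c) x q_span) map_cat.
by split; apply: lspan_nonzero_mem => y y0;
  rewrite !(mem_cat, mem_rcons, inE, mem_filter) y0 /= orbA.
Qed.

Lemma gauss_jordanP cols ps done rest :
  pivot_rows ps done ->
  {in rest, forall u, {in ps, forall t, u@_t = 0}} ->
  {in rest, forall u, {subset msupp u <= cols}} ->
  exists ps', pivot_rows ps' (gauss_jordan cols done rest) /\
    forall x, lspan (gauss_jordan cols done rest) x <-> lspan (done ++ rest) x.
Proof.
elim: cols ps done rest => [|c cs IH] ps done rest piv rest_ps rest_cols /=.
  exists ps; split=> // x; split; apply: lspan_nonzero_mem => y y0.
    by rewrite mem_cat => ->.
  rewrite mem_cat => /orP[// | /rest_cols].
  by case: (msupp y) (msupp_eq0 y) => [/eqP|t s _ /(_ t (mem_head t s))]; rewrite ?(negbTE y0).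
set i := find _ rest; case: ifP => [i_rest | no_pivot]; last first.
  have rest_c : {in rest, forall u, u@_c = 0}.
    move=> u ru; apply/eqP; apply: contraFT no_pivot => uc.
    by rewrite -has_find; apply/hasP; exists u.
  apply: (IH ps) => // u ru t ut; move: (rest_cols u ru t ut).
  by rewrite inE => /predU1P[tc|//]; move: ut; rewrite mcoeff_msupp tc rest_c ?eqxx.
set p := nth 0 rest i.
have rest_p : p \in rest by apply: mem_nth.
have pc : p@_c != 0.
  by apply: (nth_find 0 (a := fun p : poly => p@_c != 0)); rewrite has_find.
set q := (p@_c)^-1 *: p.
have qc : q@_c = 1 by rewrite mcoeffZ mulVf.
have q_ps : {in ps, forall t, q@_t = 0}
  by move=> t pst; rewrite mcoeffZ (rest_ps p rest_p t pst) mulr0.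
have q_span : lspan (done ++ rest) q.
  by apply: lspanZ; apply: lspan_mem; rewrite mem_cat rest_p orbT.
set rest' := [seq u <- _ | u != 0].
have rest'_ps : {in rest', forall u, {in rcons ps c, forall t, u@_t = 0}}.
  move=> v; rewrite mem_filter => /andP[_ /mapP[u ru ->]] t.
  rewrite mem_rcons inE mcoeffB mcoeffZ => /predU1P[->|pst]; first by rewrite qc mulr1 subrr.
  by rewrite q_ps // (rest_ps u ru t pst) mulr0 subr0.
have rest'_cols : {in rest', forall u, {subset msupp u <= cs}}.
  move=> v; rewrite mem_filter => /andP[_ /mapP[u ru ->]] t.
  rewrite mcoeff_msupp mcoeffB mcoeffZ => ut.
  have tc : t != c by apply: contraNneq ut => ->; rewrite qc mulr1 subrr eqxx.
  suff : t \in c :: cs by rewrite inE (negbTE tc).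
  have [ut0|] := eqVneq (u@_t) 0; last by rewrite -mcoeff_msupp; apply: rest_cols.
  apply: (rest_cols p rest_p); move: ut.
  by rewrite ut0 sub0r oppr_eq0 mcoeffZ !mulf_eq0 !negb_or mcoeff_msupp => /and3P[].
have [ps' [piv' span']] := IH _ _ _ (pivot_rows_rcons piv qc q_ps) rest'_ps rest'_cols.
exists ps'; split=> // x; exact: iff_trans (span' x) (lspan_pivot_step c x q_span).
Qed.

Lemma pivot_rows_expand ps rows h : pivot_rows ps rows -> lspan rows h ->
  h = \sum_(j < size rows) h@_(nth 0%MM ps j) *: nth 0 rows j.
Proof.
move=> [_ rowsE].
pose expand h := \sum_(j < size rows) h@_(nth 0%MM ps j) *: nth 0 rows j.
apply: (lspan_ind (S := fun h => h = expand h)) => [|_ /(nthP 0)[i ir <-]]; rewrite /expand.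
  split=> [|x y {1}-> {1}->|a x {1}->].
  - by rewrite big1 // => j _; rewrite mcoeff0 scale0r.
  - by rewrite -big_split; apply: eq_bigr => j _; rewrite mcoeffD scalerDl.
  - by rewrite scaler_sumr; apply: eq_bigr => j _; rewrite mcoeffZ scalerA.
rewrite (bigD1 (Ordinal ir)) //= rowsE // eqxx scale1r big1 ?addr0 // => j ji.
by move: ji; rewrite -val_eqE /= => /negbTE ji; rewrite rowsE // eq_sym ji scale0r.
Qed.

Lemma pivot_rows_mem ps rows t :
  pivot_rows ps rows -> lspan rows 'X_[t] -> 'X_[t] \in rows.
Proof.
move=> piv /(pivot_rows_expand piv) Xt; have [_ rowsE] := piv.
case: (pickP (fun j : 'I_(size rows) => nth 0%MM ps j == t)) => [j /eqP psj | no_j].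
  rewrite Xt (bigD1 j) //= mcoeffX psj eqxx scale1r big1 ?addr0 ?mem_nth //.
  move=> k kj; rewrite mcoeffX; case: eqP => [tk|]; last by rewrite scale0r.
  have := rowsE j k (ltn_ord j) (ltn_ord k).
  move: kj; rewrite -val_eqE /= => /negbTE kj.
  by rewrite -tk -psj rowsE // eqxx eq_sym kj => /eqP; rewrite oner_eq0.
rewrite big1 in Xt => [|k _]; last by rewrite mcoeffX eq_sym no_j scale0r.
by move/(congr1 (mcoeff t)): Xt; rewrite mcoeffX eqxx mcoeff0 => /eqP; rewrite oner_eq0.
Qed.

Lemma LI_pivot_rows Z g :
  exists ps, pivot_rows ps (LI Z g) /\ forall x, lspan (LI Z g) x <-> lspan g x.
Proof.
apply: (gauss_jordanP (ps := [::])) => // u gu t ut; rewrite mem_cat.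
case: (boolP (t \in map (@var_term n) Z)) => //= tZ.
rewrite mem_sort mem_undup mem_filter tZ /=.
by apply/flatten_mapP; exists u.
Qed.

Lemma LI_span Z g x : lspan (LI Z g) x <-> lspan g x.
Proof. by have [ps [_ ->]] := LI_pivot_rows Z g. Qed.

Lemma LI_mem_var Z g t : lspan g 'X_[t] -> 'X_[t] \in LI Z g.
Proof.
move=> gX; have [ps [piv span]] := LI_pivot_rows Z g.
exact: pivot_rows_mem piv (proj2 (span _) gX).
Qed.

End GaussJordan.

Section LinearPart.
Variables (K : fieldType) (n : nat).
Local Notation poly := {mpoly K[n]}.

Definition lin_row (h : poly) : 'rV[K]_n := \row_k h@_(var_term k).

Lemma lin_row_is_linear : linear lin_row.
Proof. by move=> a p q; apply/rowP => k; rewrite !mxE mcoeffD mcoeffZ. Qed.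

HB.instance Definition _ :=
  GRing.isLinear.Build K poly 'rV[K]_n *:%R lin_row lin_row_is_linear.

Lemma lin_rowX k : lin_row 'X_[var_term k] = delta_mx 0 k.
Proof.
by apply/rowP => j; rewrite !mxE mcoeffX (inj_eq (@var_term_inj n)) eqxx eq_sym.
Qed.

Lemma lin_row_expand h : lin_row h = \sum_(k < n) h@_(var_term k) *: lin_row 'X_[var_term k].
Proof.
under eq_bigr do rewrite lin_rowX.
apply/rowP => j; rewrite summxE (bigD1 j) //= big1 => [|k kj]; rewrite !mxE ?eqxx.
  by rewrite mulr1 addr0.
by rewrite eq_sym (negbTE kj) mulr0.
Qed.

Lemma lin_row_sub (l : seq poly) h : lspan l h ->
  (lin_row h <= \matrix_(j < size l, k < n) (l`_j)@_(var_term k))%MS.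
Proof.
move=> /(lspan_map (f := lin_row)); apply: submx_lspan => y /mapP[p /(nthP 0)[j jl <-] ->].
by apply: (eq_row_sub (Ordinal jl)); apply/rowP => k; rewrite !mxE.
Qed.

Lemma rank_delta_rows (Z : seq 'I_n) : uniq Z ->
  \rank (\matrix_(i < size Z) (delta_mx 0 (tnth (in_tuple Z) i) : 'rV[K]_n)) = size Z.
Proof.
move=> Zuniq; set E := \matrix_(i < _) _; apply/eqP; rewrite eqn_leq rank_leq_row.
apply: (@mulmx1_min_rank _ _ _ _ _ 1%:M E^T); rewrite mul1mx; apply/matrixP => i j.
rewrite !mxE (bigD1 (tnth (in_tuple Z) i)) //= big1 => [|k ki].
  by rewrite !mxE !eqxx mul1r addr0 (inj_eq (tuple_uniqP (in_tuple Z) Zuniq)) eq_sym.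
by rewrite !mxE (negbTE ki) andbF mul0r.
Qed.

End LinearPart.

Section TermOrdering.
Variables (K : fieldType) (n : nat) (le : rel 'X_{1..n}).
Hypothesis le_ord : term_ordering le.
Local Notation poly := {mpoly K[n]}.
Implicit Types (Z : seq 'I_n) (f : poly) (g : seq poly).

Lemma term_le_refl : reflexive le. Proof. by case: le_ord => -[]. Qed.
Lemma term_le_anti : antisymmetric le. Proof. by case: le_ord => -[]. Qed.
Lemma term_le_trans : transitive le. Proof. by case: le_ord => -[]. Qed.
Lemma term_le_total : total le. Proof. by case: le_ord => -[]. Qed.

Lemma var_term_le (t : 'X_{1..n}) k : (0 < t k)%N -> le (var_term k) t.
Proof.
move=> tk; have [_ [le0 leD]] := le_ord.
have := leD 0%MM (t - var_term k)%MM (var_term k) (le0 _); rewrite add0m submK //.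
by apply/mnm_lepP => i; rewrite var_termE; case: eqP => // <-.
Qed.

Definition var_lt (y z : 'I_n) := le (var_term y) (var_term z) && (y != z).

Lemma var_lt_irr : irreflexive var_lt.
Proof. by move=> z; rewrite /var_lt eqxx andbF. Qed.

Lemma var_lt_trans : transitive var_lt.
Proof.
move=> y x z /andP[xy x_y] /andP[yz y_z]; rewrite /var_lt (term_le_trans xy yz).
apply: contraNneq x_y => xz; apply/eqP/var_term_inj/term_le_anti.
by rewrite xy xz yz.
Qed.

Lemma var_min_le Z zm : (forall y, y \in Z -> ~~ var_lt y zm) ->
  forall z, z \in Z -> le (var_term zm) (var_term z).
Proof.
move=> min_zm z Zz; case: (eqVneq z zm) => [->|z_zm]; first exact: term_le_refl.
have := min_zm z Zz; rewrite /var_lt z_zm andbT.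
by case/orP: (term_le_total (var_term z) (var_term zm)) => ->.
Qed.

Lemma keep_Z_var_mem Z f k : keep_Z Z f = f -> f@_(var_term k) != 0 -> k \in Z.
Proof.
move=> <-; rewrite mcoeff_keep_Z; case: hasP => [[z Zz]|]; last by rewrite eqxx.
by rewrite var_termE; case: eqP => // ->.
Qed.

Lemma keep_Z_LT_minimalE Z f zm :
  keep_Z Z f = f -> is_LT le f (var_term zm) ->
  (forall z, z \in Z -> le (var_term zm) (var_term z)) ->
  f = f@_(var_term zm) *: 'X_[var_term zm].
Proof.
move=> fZ [_ f_le] zm_min; apply/mpolyP => m; rewrite mcoeffZ mcoeffX.
case: eqP => [<-|m_zm]; first by rewrite mulr1.
rewrite mulr0 -fZ mcoeff_keep_Z; case: hasP => [[z Zz mz]|//].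
apply: memN_msupp_eq0; apply/negP => fm; apply: m_zm.
apply: term_le_anti; rewrite f_le // andbT.
exact: term_le_trans (zm_min z Zz) (var_term_le mz).
Qed.

Lemma lin_rowX_sub Z (l : seq poly) :
  (forall p, p \in l -> keep_Z Z p = p) ->
  (forall z, z \in Z -> exists2 f, lspan l f & is_LT le f (var_term z)) ->
  forall z, z \in Z ->
    (lin_row 'X_[var_term z] <= \matrix_(j < size l, k < n) (l`_j)@_(var_term k))%MS.
Proof.
move=> lZ sep; apply: (strong_ind_in var_lt_irr var_lt_trans) => z Zz IH.
have [f lf [fz f_le]] := sep z Zz.
have fZ : keep_Z Z f = f := lspan_fixed lZ lf.
set c := f@_(var_term z); have c0 : c != 0 by rewrite -mcoeff_msupp.
set M := \matrix_(j < _, k < n) _.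
have others : (lin_row f - c *: lin_row 'X_[var_term z] <= M)%MS.
  rewrite lin_row_expand (bigD1 z) //= addrAC subrr add0r.
  apply: summx_sub => k kz; have [->|fk] := eqVneq (f@_(var_term k)) 0.
    by rewrite scale0r sub0mx.
  apply/scalemx_sub/IH; first exact: keep_Z_var_mem fZ fk.
  by rewrite /var_lt kz f_le // mcoeff_msupp.
have -> : lin_row 'X_[var_term z] =
    c^-1 *: (lin_row f - (lin_row f - c *: lin_row 'X_[var_term z])).
  by rewrite opprB addrC subrK scalerA mulVf // scale1r.
apply/scalemx_sub/addmx_sub; first exact: lin_row_sub.
by rewrite -scaleN1r; apply: scalemx_sub.
Qed.

Lemma dim_Lin_ge Z (l : seq poly) : uniq Z ->
  (forall p, p \in l -> keep_Z Z p = p) ->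
  (forall z, z \in Z -> exists2 f, lspan l f & is_LT le f (var_term z)) ->
  (size Z <= dim_Lin l)%N.
Proof.
move=> Zuniq lZ sep; rewrite -(rank_delta_rows K Zuniq) /dim_Lin mxrankS //.
apply/row_subP => i; rewrite rowK -lin_rowX.
by apply: lin_rowX_sub lZ sep _ (mem_tnth i (in_tuple Z)).
Qed.

Lemma lspan_minimal_var Z g zm :
  (forall p, p \in g -> keep_Z Z p = p) ->
  (forall z, z \in Z -> exists2 f, lspan g f & is_LT le f (var_term z)) ->
  zm \in Z -> (forall y, y \in Z -> ~~ var_lt y zm) -> lspan g 'X_[var_term zm].
Proof.
move=> gZ sep Zzm zm_min; have [f gf f_LT] := sep zm Zzm.
have fX := keep_Z_LT_minimalE (lspan_fixed gZ gf) f_LT (var_min_le zm_min).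
have c0 : f@_(var_term zm) != 0 by rewrite -mcoeff_msupp; case: f_LT.
by rewrite -[X in lspan _ X](scalerK c0) -fX; apply: lspanZ.
Qed.

Lemma check_loop_complete delta fuel Z g w d :
  Z != [::] -> (size Z <= fuel)%N ->
  (forall p, p \in g -> keep_Z Z p = p) ->
  (forall z, z \in Z -> exists2 f, lspan g f & is_LT le f (var_term z)) ->
  exists W, check_loop delta fuel Z g w d = Some W.
Proof.
elim: fuel Z g w d => [|fuel IH] Z g w d Z0; first by rewrite leqn0 size_eq0 (negbTE Z0).
move=> Z_fuel gZ sep /=; set Zt := [seq z <- Z | _].
have [zm Zzm zm_min] := minimal_in var_lt_irr var_lt_trans Z0.
have zm_Zt : zm \in Zt.
  by rewrite mem_filter Zzm andbT (LI_mem_var _ (lspan_minimal_var gZ sep Zzm zm_min)).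
case: eqP => [Zt0|_]; first by rewrite Zt0 in zm_Zt.
set Z' := [seq z <- Z | _]; case: eqP => [_|/eqP Z'0]; first by eexists.
apply: IH => // [|p /mapP[q _ ->]|z Z'z].
- rewrite -ltnS (leq_trans _ Z_fuel) // size_filter -(count_predC (mem Zt)) addnC.
  by rewrite -addn1 leq_add2l -has_count; apply/hasP; exists zm.
- by rewrite keep_Z_id.
have [Zz zZt] : z \in Z /\ z \notin Zt by move: Z'z; rewrite mem_filter => /andP[].
have [f gf f_LT] := sep z Zz; exists (keep_Z Z' f); last exact: is_LT_keep_Z.
by apply: lspan_map; apply: (proj2 (LI_span Z g f)).
Qed.

End TermOrdering.

Section Weights.
Import Order.TTheory.
Variables (K : fieldType) (n : nat).
Local Notation poly := {mpoly K[n]}.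
Local Notation term := 'X_{1..n}.
Implicit Types (w W : {ffun 'I_n -> nat}) (t : term) (f : poly) (Z : seq 'I_n) (G g : seq poly).

Definition wt w t : nat := \sum_(k < n) w k * t k.

Lemma wt0 w : wt w 0%MM = 0%N.
Proof. by rewrite /wt big1 // => k _; rewrite mnm0E muln0. Qed.

Lemma wtD w t1 t2 : wt w (t1 + t2)%MM = (wt w t1 + wt w t2)%N.
Proof. by rewrite /wt -big_split; apply: eq_bigr => k _; rewrite mnmDE mulnDr. Qed.

Lemma wt_var w z : wt w (var_term z) = w z.
Proof.
rewrite /wt (bigD1 z) //= var_termE eqxx muln1 big1 ?addn0 // => k kz.
by rewrite var_termE eq_sym (negbTE kz) muln0.
Qed.

Lemma eq_wt w w' t : (forall k, (0 < t k)%N -> w k = w' k) -> wt w t = wt w' t.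
Proof.
move=> ww'; apply: eq_bigr => k _.
by case: (posnP (t k)) => [->|/ww' ->]; rewrite ?muln0.
Qed.

Lemma wt_lt w delta d t : (0 < d)%N -> (forall k, delta * w k < d)%N ->
  (mdeg t <= delta)%N -> (wt w t < d)%N.
Proof.
move=> d0 w_d t_delta; have [delta0|delta_pos] := posnP delta.
  by move: t_delta; rewrite delta0 leqn0 mdeg_eq0 => /eqP->; rewrite wt0.
have : (delta * wt w t <= mdeg t * d.-1)%N.
  rewrite /wt big_distrr mdegE big_distrl /=; apply: leq_sum => k _.
  by rewrite mulnA mulnC leq_mul2l -ltnS prednK // w_d orbT.
move=> le1; rewrite -[d](prednK d0) ltnS -(leq_pmul2l delta_pos).
by apply: leq_trans le1 _; rewrite leq_mul2r t_delta orbT.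
Qed.

Definition wt_le w t1 t2 :=
  (wt w t1 < wt w t2)%N || ((wt w t1 == wt w t2) && (t1 <= t2)%O).

Lemma wt_le_term_ordering w : term_ordering (wt_le w).
Proof.
split; [split|split].
- by move=> t; rewrite /wt_le eqxx lexx orbT.
- move=> t1 t2 /andP[]; rewrite /wt_le.
  case: (ltngtP (wt w t1) (wt w t2)) => //= _ t12 t21.
  by apply/eqP; rewrite eq_le t12 t21.
- move=> t2 t1 t3; rewrite /wt_le.
  case: (ltngtP (wt w t1) (wt w t2)) => //= w12; case: (ltngtP (wt w t2) (wt w t3)) => //= w23.
  + by rewrite (ltn_trans w12 w23).
  + by rewrite -w23 w12.
  + by rewrite w12 w23.
  + by rewrite w12 w23 eqxx ltnn /=; apply: le_trans.
- by move=> t1 t2; rewrite /wt_le; case: ltngtP => //= _; apply: le_total.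
- by move=> t; rewrite /wt_le wt0; case: posnP => [->|//]; rewrite le0m orbT.
- by move=> t1 t2 t3; rewrite /wt_le !wtD ltn_add2r eqn_add2r lemc_add2l.
Qed.

Lemma is_LT_wt_le w f t : t \in msupp f ->
  (forall t', t' \in msupp f -> t' != t -> (wt w t' < wt w t)%N) -> is_LT (wt_le w) f t.
Proof.
move=> ft f_wt; split=> // t' ft'; rewrite /wt_le.
by have [->|t't] := eqVneq t' t; rewrite ?eqxx ?lexx ?orbT // f_wt.
Qed.

Lemma lspan_mdeg_le G f t : lspan G f -> t \in msupp f ->
  (mdeg t <= \max_(p <- G) total_degree p)%N.
Proof.
move=> Gf; rewrite mcoeff_msupp; move: t.
apply: (lspan_ind (S := fun f => forall t, f@_t != 0 -> _)) Gf.
  split=> [t|x y x_le y_le t|a x x_le t].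
  - by rewrite mcoeff0 eqxx.
  - by rewrite mcoeffD; have [x0|/x_le//] := eqVneq (x@_t) 0; rewrite x0 add0r => /y_le.
  - by rewrite mcoeffZ mulf_eq0 negb_or => /andP[_ /x_le].
move=> p Gp t; rewrite -mcoeff_msupp => pt.
exact: leq_trans (leq_bigmax_seq _ pt isT) (leq_bigmax_seq _ Gp isT).
Qed.

Lemma keep_Z_eqX_out Z f z t k : keep_Z Z f = 'X_[var_term z] ->
  t \in msupp f -> t != var_term z -> (0 < t k)%N -> k \notin Z.
Proof.
move=> fX ft tz tk; apply/negP => Zk; move: ft.
have tZ : has (fun k => 0 < t k)%N Z by apply/hasP; exists k.
have := congr1 (mcoeff t) fX; rewrite mcoeff_keep_Z tZ mcoeffX eq_sym (negbTE tz).
by rewrite mcoeff_msupp => ->; rewrite eqxx.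
Qed.

Lemma keep_Z_eqX_is_LT delta Z w d W f z :
  (forall t, t \in msupp f -> mdeg t <= delta)%N -> (0 < d)%N ->
  (forall k, delta * w k < d)%N -> (forall k, k \notin Z -> W k = w k) -> W z = d ->
  z \in Z -> keep_Z Z f = 'X_[var_term z] -> is_LT (wt_le W) f (var_term z).
Proof.
move=> f_deg d0 w_d W_out Wz Zz fX; apply: is_LT_wt_le => [|t ft tz].
  have := congr1 (mcoeff (var_term z)) fX.
  by rewrite mcoeff_keep_Z keep_Z_var // mcoeffX eqxx mcoeff_msupp => ->; apply: oner_neq0.
rewrite wt_var Wz (eq_wt (w' := w)) ?(wt_lt d0 w_d) ?f_deg // => k tk.
by rewrite W_out // (keep_Z_eqX_out fX ft tz tk).
Qed.

Lemma check_loop_sound G delta fuel Z g w d W :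
  (forall f t, lspan G f -> t \in msupp f -> mdeg t <= delta)%N ->
  check_loop delta fuel Z g w d = Some W ->
  (forall h, lspan g h -> exists2 f, lspan G f & h = keep_Z Z f) ->
  (0 < d)%N -> (forall k, delta * w k < d)%N ->
  (forall k, k \notin Z -> W k = w k) /\
  (forall z, z \in Z -> exists2 f, lspan G f & is_LT (wt_le W) f (var_term z)).
Proof.
move=> G_deg; elim: fuel Z g w d => [//|fuel IH] Z g w d /=.
set Zt := [seq z <- Z | _]; case: eqP => // _.
set w' := [ffun k => _]; set Z' := [seq z <- Z | _].
move=> loop g_keep d0 w_d.
have w'_out k : k \notin Z -> w' k = w k.
  by rewrite ffunE mem_filter; case: (k \in Z) => //; rewrite andbF.
have Z'Z : {subset Z' <= Z} by move=> z; rewrite mem_filter => /andP[].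
have [W_out W_sep] : (forall k, k \notin Z' -> W k = w' k) /\
    (forall z, z \in Z' -> exists2 f, lspan G f & is_LT (wt_le W) f (var_term z)).
  move: loop; case: eqP => [Z'0 [<-] | _ loop]; first by split=> // z; rewrite Z'0.
  apply: IH loop _ _ _ => [h /(lspan_mapP (f := keep_Z Z'))[h1] | | k].
  - move=> gh1 ->; have [f Gf ->] := g_keep h1 (proj1 (LI_span _ _ _) gh1).
    by exists f => //; apply: keep_Z_sub.
  - by rewrite addn1.
  - rewrite addn1 ltnS ffunE; case: ifP => _; first exact: leqnn.
    have [->|delta_pos] := posnP delta; first by rewrite !mul0n.
    by apply: leq_trans (ltnW (w_d k)) _; rewrite leq_pmull.
have W_outZ k : k \notin Z -> W k = w k.
  by move=> kZ; rewrite W_out ?w'_out //; apply: contra kZ; apply: Z'Z.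
split=> // z Zz; have [zZt|zZt] := boolP (z \in Zt); last by apply: W_sep; rewrite mem_filter zZt.
have zX : 'X_[var_term z] \in LI Z g by move: zZt; rewrite mem_filter => /andP[].
have [f Gf fX] := g_keep _ (proj1 (LI_span Z g _) (lspan_mem zX)).
exists f => //; apply: (keep_Z_eqX_is_LT _ d0 w_d W_outZ) => //.
- by move=> t; apply: G_deg.
- by rewrite W_out ?ffunE ?zZt // mem_filter zZt.
Qed.

End Weights.

Section Check.
Variables (K : fieldType) (n : nat).
Local Notation poly := {mpoly K[n]}.
Implicit Types (G : seq poly) (Zs : seq 'I_n).

Lemma CHECK_separating G Zs W : CHECK G Zs = Some W ->
  forall z, z \in Zs -> exists2 f, lspan G f & is_LT (wt_le W) f (var_term z).
Proof.
rewrite /CHECK; case: ifP => // _ loop_W.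
have [||_ //] := check_loop_sound (lspan_mdeg_le (G := G)) loop_W _ (ltn0Sn 0).
- by move=> h /(lspan_mapP (f := keep_Z Zs)).
- by move=> k; rewrite ffunE muln0.
Qed.

Lemma CHECK_complete (le : rel 'X_{1..n}) G Zs :
  term_ordering le -> uniq Zs -> Zs != [::] ->
  (forall z, z \in Zs -> exists2 f, lspan G f & is_LT le f (var_term z)) ->
  exists W, CHECK G Zs = Some W.
Proof.
move=> le_ord Zs_uniq Zs0 sep.
have G_Zs p : p \in map (keep_Z Zs) G -> keep_Z Zs p = p.
  by case/mapP => q _ ->; rewrite keep_Z_id.
have sepZ z : z \in Zs -> exists2 h, lspan (map (keep_Z Zs) G) h & is_LT le h (var_term z).
  move=> Zz; have [f Gf f_LT] := sep z Zz.
  by exists (keep_Z Zs f); [apply: lspan_map | apply: is_LT_keep_Z].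
rewrite /CHECK ltnNge (dim_Lin_ge le_ord Zs_uniq G_Zs sepZ) /=.
by apply: (check_loop_complete le_ord).
Qed.

End Check.

Lemma in_KspanP (K : fieldType) (n r : nat) (g : 'I_r -> {mpoly K[n]}) f :
  in_Kspan g f <-> lspan [seq g j | j <- enum 'I_r] f.
Proof.
split=> [[c ->]|].
  apply: big_ind => [|x y|j _]; [exact: lspan0 | exact: lspanD |].
  by apply: lspanZ; apply: lspan_mem; rewrite map_f ?mem_enum.
apply: lspan_ind => [|_ /mapP[j _ ->]].
  split=> [|_ _ [c1 ->] [c2 ->]|a _ [c ->]].
  - by exists (fun _ => 0); rewrite big1 // => j _; rewrite scale0r.
  - exists (fun j => c1 j + c2 j); rewrite -big_split.
    by apply: eq_bigr => j _; rewrite scalerDl.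
  - exists (fun j => a * c j); rewrite scaler_sumr.
    by apply: eq_bigr => j _; rewrite scalerA.
exists (fun k => (k == j)%:R); rewrite (bigD1 j) //= eqxx scale1r big1 ?addr0 // => k /negbTE ->.
by rewrite scale0r.
Qed.

Lemma in_Kspan_ideal (K : fieldType) (n r : nat) (g : 'I_r -> {mpoly K[n]}) f :
  in_Kspan g f -> in_ideal g f.
Proof.
by move=> [c ->]; exists (fun j => (c j)%:MP); apply: eq_bigr => j _; rewrite mul_mpolyC.
Qed.

Theorem proposition3p3 (K : fieldType) (n r s : nat)
    (g : 'I_r -> {mpoly K[n]}) (Z : 'I_s -> 'I_n) :
  injective Z -> (0 < s)%N ->
  (exists W : {ffun 'I_n -> nat},
      CHECK [seq g j | j <- enum 'I_r] [seq Z i | i <- enum 'I_s] = Some W)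
  <->
  (exists f : 'I_s -> {mpoly K[n]},
      (forall i, in_ideal g (f i) /\ in_Kspan g (f i)) /\ Z_separating Z f).
Proof.
move=> Z_inj s_pos; set G := [seq g j | j <- enum 'I_r]; set Zs := [seq Z i | i <- enum 'I_s].
have Zs_Z i : Z i \in Zs by rewrite map_f ?mem_enum.
split=> [[W /CHECK_separating W_sep] | [f [f_span [le [le_ord f_LT]]]]].
  have /fin_all_exists[f f_sep] i : exists f, lspan G f /\ is_LT (wt_le W) f (var_term (Z i)).
    by have [f ? ?] := W_sep _ (Zs_Z i); exists f.
  exists f; split=> [i|]; last first.
    by exists (wt_le W); split=> [|i]; [apply: wt_le_term_ordering | case: (f_sep i)].
  have Kf : in_Kspan g (f i) by apply/in_KspanP; case: (f_sep i).
  by split=> //; apply: in_Kspan_ideal.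
apply: (CHECK_complete le_ord).
- by rewrite map_inj_uniq ?enum_uniq.
- by rewrite -size_eq0 size_map size_enum_ord -lt0n.
- move=> _ /mapP[i _ ->]; exists (f i); last exact: f_LT.
  by apply/in_KspanP; case: (f_span i).
Qed.
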